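(* Let $1<K<n$, let $\|\cdot\|_s$ be a sign- and permutation-invariant norm on $\mathbb{R}^n$, and let $\|\cdot\|_c$ be the gauge of $\mathrm{conv}(N^K_{\|\cdot\|_s})$. Then for every $x\in\mathbb{R}^n$, $\|x\|_c=\|u(x)\|_s$.
   Context: A norm is sign- and permutation-invariant if $\|Px\|_s=\|x\|_s$ for every permutation matrix $P$ and $\|\bar x\|_s=\|x\|_s$ whenever $|\bar x|=|x|$ componentwise. $N^K_{\|\cdot\|_s}=\{x\in\mathbb{R}^n\mid\|x\|_s\le 1,\ \mathrm{card}(x)\le K\}$, where $\mathrm{card}(x)$ is the number of nonzero entries. $\mathrm{conv}(N^K_{\|\cdot\|_s})$ is a compact convex set, symmetric about 0, containing 0 in its interior, and its gauge $\|x\|_c=\min\{t>0\mid x/t\in\mathrm{conv}(N^K_{\|\cdot\|_s})\}$ is a norm. For $x\in\mathbb{R}^n$, with $|x|_{[i]}$ the $i$-th largest absolute value of entries of $x$: $s(x)_i=\frac{\sum_{j=i}^n|x|_{[j]}}{K-i+1}$ ($i=1,\dots,K$); $i_x$ is the smallest index in $\{1,\dots,K\}$ minimizing $s(x)_i$; $\delta(x)=s(x)_{i_x}$; $u(x)_i=|x|_{[i]}$ for $i<i_x$, $u(x)_i=\delta(x)$ for $i_x\le i\le K$, $u(x)_i=0$ for $i>K$. *)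

From Stdlib Require Import Reals.
From mathcomp Require Import ssreflect ssrfun ssrbool eqtype ssrnat seq path fintype bigop.

Set Implicit Arguments.
Unset Strict Implicit.
Unset Printing Implicit Defensive.

Local Open Scope R_scope.

Notation vec n := ('I_n -> R).

Definition Rsum (m : nat) (f : 'I_m -> R) : R := \big[Rplus/0]_(j < m) f j.

Definition is_norm (n : nat) (N : vec n -> R) : Prop :=
  (forall x, N x = 0 -> forall i, x i = 0) /\
  (forall (a : R) x, N (fun i => a * x i) = Rabs a * N x) /\
  (forall x y, N (fun i => x i + y i) <= N x + N y).

Definition perm_invariant (n : nat) (N : vec n -> R) : Prop :=
  forall (sigma : 'I_n -> 'I_n) (x : vec n), bijective sigma ->
    N (fun i => x (sigma i)) = N x.

Definition sign_invariant (n : nat) (N : vec n -> R) : Prop :=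
  forall x y : vec n, (forall i, Rabs (y i) = Rabs (x i)) -> N y = N x.

Definition card_nz (n : nat) (x : vec n) : nat :=
  #|[pred i : 'I_n | if Req_EM_T (x i) 0 then false else true]|.

Definition NK (n K : nat) (N : vec n -> R) (x : vec n) : Prop :=
  N x <= 1 /\ (card_nz x <= K)%N.

Definition conv (n : nat) (S : vec n -> Prop) (y : vec n) : Prop :=
  exists (m : nat) (l : 'I_m -> R) (p : 'I_m -> vec n),
    (forall j, 0 <= l j) /\ Rsum l = 1 /\ (forall j, S (p j)) /\
    (forall i, y i = Rsum (fun j => l j * p j i)).

(* g is the gauge of C at x:  g = inf { t > 0 | x / t \in C }
   (for C compact convex with 0 in its interior, this is a min for x <> 0,
    and 0 for x = 0) *)
Definition is_gauge (n : nat) (C : vec n -> Prop) (x : vec n) (g : R) : Prop :=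
  (forall t, 0 < t -> C (fun i => x i / t) -> g <= t) /\
  (forall b, (forall t, 0 < t -> C (fun i => x i / t) -> b <= t) -> b <= g).

(* absolute values of entries sorted in non-increasing order;
   (abs_sorted x)`_(k) = |x|_[k+1]  (0-based index k) *)
Definition abs_sorted (n : nat) (x : vec n) : seq R :=
  sort (fun a b => if Rle_dec b a then true else false)
       [seq Rabs (x i) | i <- enum 'I_n].

Definition absx (n : nat) (x : vec n) (k : nat) : R := nth 0 (abs_sorted x) k.

(* s(x)_(k+1) for 0-based k in 0..K-1:
   (sum_{j=k}^{n-1} |x|_[j+1]) / (K - k) *)
Definition sx (n K : nat) (x : vec n) (k : nat) : R :=
  (\big[Rplus/0]_(k <= j < n) absx x j) / INR (K - k).

(* 0-based index of the smallest minimizer of sx over 0..K-1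
   (i_x = ix + 1); scanning left to right, replace only on strict decrease *)
Definition ix (n K : nat) (x : vec n) : nat :=
  foldl (fun best k => if Rlt_dec (sx K x k) (sx K x best) then k else best)
        0%N (iota 1 (K - 1)).

Definition delta (n K : nat) (x : vec n) : R := sx K x (ix K x).

Definition u (n K : nat) (x : vec n) : vec n :=
  fun i => if (i < ix K x)%N then absx x i
           else if (i < K)%N then delta K x else 0.

(* Lower bound: if [x / t] is a convex combination of points [z_j] of [N^K], the prefix
   sums of [u(x)] are dominated by those of [v = sum_j l_j |t z_j|_sorted]: up to [i_x] they
   are those of the sorted [|x|], then they grow linearly until [K] while those of [v] are
   concave, and both reach at least [sum |x|] at [K].  A symmetric norm is monotone for this
   weak majorization of nonincreasing nonnegative vectors (by Robin Hood transfers), whence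
   [||u(x)|| <= sum_j l_j ||t z_j|| <= t].
   Upper bound: the sorted tail of [|x|] beyond [i_x] lies in the hypersimplex
   [{0 <= c <= delta, sum c <= (K - i_x + 1) delta}], whose points are convex combinations
   of vectors with at most [K - i_x + 1] nonzero entries in [[0, delta]]; completed with the
   head of [x], these are [K]-sparse vectors of norm at most [||u(x)||]. *)

From Stdlib Require Import Reals Lra Lia Psatz Classical.
From HB Require Import structures.
From mathcomp Require Import ssreflect ssrfun ssrbool eqtype ssrnat seq path fintype tuple bigop finset fingroup perm.
From mathcomp Require Import zify.

Set Implicit Arguments.
Unset Strict Implicit.
Unset Printing Implicit Defensive.
Local Open Scope R_scope.

Definition Reqb (a b : R) : bool := if Req_EM_T a b then true else false.

Lemma ReqbP : Equality.axiom Reqb.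
Proof. by move=> a b; rewrite /Reqb; case: Req_EM_T => h; constructor. Qed.

HB.instance Definition _ := hasDecEq.Build R ReqbP.
HB.instance Definition _ := Monoid.isComLaw.Build R 0 Rplus
  (fun a b c => esym (Rplus_assoc a b c)) Rplus_comm Rplus_0_l.
HB.instance Definition _ := Monoid.isMulLaw.Build R 0 Rmult Rmult_0_l Rmult_0_r.
HB.instance Definition _ := Monoid.isAddLaw.Build R Rmult Rplus
  Rmult_plus_distr_r Rmult_plus_distr_l.

Definition Rltb (a b : R) : bool := if Rlt_dec a b then true else false.

Lemma RltbP a b : reflect (a < b) (Rltb a b).
Proof. by rewrite /Rltb; case: Rlt_dec => h; constructor. Qed.

Lemma Rsum_le (I : Type) (r : seq I) (P : pred I) (F G : I -> R) :
  (forall i, P i -> F i <= G i) ->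
  \big[Rplus/0]_(i <- r | P i) F i <= \big[Rplus/0]_(i <- r | P i) G i.
Proof. by move=> h; apply: (big_ind2 (fun a b => a <= b)) => *; lra || exact: h. Qed.

Lemma Rsum_ge0 (I : Type) (r : seq I) (P : pred I) (F : I -> R) :
  (forall i, P i -> 0 <= F i) -> 0 <= \big[Rplus/0]_(i <- r | P i) F i.
Proof. by move=> h; apply: (big_ind (fun a => 0 <= a)) => *; lra || exact: h. Qed.

Lemma Rsum_abs (I : Type) (r : seq I) (P : pred I) (F : I -> R) :
  Rabs (\big[Rplus/0]_(i <- r | P i) F i) <= \big[Rplus/0]_(i <- r | P i) Rabs (F i).
Proof.
apply: (big_ind2 (fun a b => Rabs a <= b)) => [|a b c d h1 h2|i _]; last lra.
  by rewrite Rabs_R0; lra.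
by have := Rabs_triang a c; lra.
Qed.

Lemma Rsum_opp (I : Type) (r : seq I) (P : pred I) (F : I -> R) :
  \big[Rplus/0]_(i <- r | P i) (- F i) = - \big[Rplus/0]_(i <- r | P i) F i.
Proof. by apply: (big_ind2 (fun a b => a = - b)); [ring|move=> ? ? ? ? -> ->; ring|]. Qed.

Lemma Rsum_const (I : finType) (P : pred I) c :
  \big[Rplus/0]_(i | P i) c = INR #|[pred i | P i]| * c.
Proof.
rewrite -sum1_card.
have -> : \sum_(i in [pred i | P i]) 1 = \sum_(i | P i) 1 by apply: eq_bigl => i; rewrite inE.
apply: (big_ind2 (fun (a : R) (b : nat) => a = INR b * c)) => [|a1 b1 a2 b2 -> ->|i _].
- by rewrite Rmult_0_l.
- by rewrite plus_INR; ring.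
- by rewrite /= Rmult_1_l.
Qed.

Lemma Rsum_const_nat a b c : \big[Rplus/0]_(a <= i < b) c = INR (b - a) * c.
Proof.
rewrite big_const_nat; elim: (b - a)%N => [|k IH]; first by rewrite /=; ring.
by rewrite iterS IH S_INR; ring.
Qed.

Lemma Rsum_le_nat a b (F G : nat -> R) :
  (forall i, (a <= i < b)%N -> F i <= G i) ->
  \big[Rplus/0]_(a <= i < b) F i <= \big[Rplus/0]_(a <= i < b) G i.
Proof.
move=> h; rewrite big_nat_cond [X in _ <= X]big_nat_cond.
by apply: Rsum_le => i /andP[hi _]; exact: h.
Qed.

Lemma Rsum_indicator (I : finType) (P : pred I) (k : I) c :
  \big[Rplus/0]_(i | P i) (if i == k then c else 0) = if P k then c else 0.
Proof.
case hk: (P k).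
  by rewrite (bigD1 k) //= eqxx big1 ?Rplus_0_r // => i /andP[_ /negbTE ->].
by rewrite big1 // => i hi; case: eqP => // e; rewrite -e hi in hk.
Qed.

Lemma Rabs_le0 a : Rabs a <= 0 -> a = 0.
Proof. by rewrite /Rabs; case: Rcase_abs; lra. Qed.

Lemma Rdiv_between a b : b <> 0 -> Rabs a <= Rabs b -> -1 <= a / b <= 1.
Proof.
move=> hb hab; have e : a = a / b * b by field.
move: e hab; set r := a / b; clearbody r => -> hab.
by move: hab; rewrite /Rabs; case: Rcase_abs; case: Rcase_abs => *; split; nra.
Qed.

Lemma card_ord_lt n k : (k <= n)%N -> #|[pred i : 'I_n | (i < k)%N]| = k.
Proof.
move=> hk; rewrite -sum1_card.
have -> : \sum_(i in [pred i : 'I_n | (i < k)%N]) 1 = \sum_(i < n | (i < k)%N) 1.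
  by apply: eq_bigl => i; rewrite inE.
by rewrite -(big_ord_widen n (fun _ => 1%N)) // sum1_card card_ord.
Qed.

Lemma card_perm_pred n (s : {perm 'I_n}) (P : pred 'I_n) :
  #|[pred i | P (s i)]| = #|[pred i | P i]|.
Proof.
rewrite -!sum1_card [RHS](reindex_inj (@perm_inj _ s)) /=.
by apply: eq_bigl => i; rewrite !inE.
Qed.

Lemma perm_bijective n (s : {perm 'I_n}) : bijective s.
Proof. by exists (s^-1)%g; [exact: permK|exact: permKV]. Qed.

Lemma card_nzE n (z : 'I_n -> R) : card_nz z = #|[pred i | Rltb 0 (Rabs (z i))]|.
Proof.
apply: eq_card => i; rewrite !inE; case: Req_EM_T => h /=.
  by apply/esym/negbTE/RltbP; rewrite h Rabs_R0; lra.
by apply/esym/RltbP; exact: Rabs_pos_lt.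
Qed.

Lemma card_nz_scale n (a : R) (z : 'I_n -> R) : a <> 0 ->
  card_nz (fun i => a * z i) = card_nz z.
Proof.
move=> ha; apply: eq_card => i; rewrite !inE.
case: Req_EM_T => h1; case: Req_EM_T => h2 //.
  by case: (Rmult_integral _ _ h1).
by case: h1; rewrite h2 Rmult_0_r.
Qed.

Lemma card_nz_ext n (f g : 'I_n -> R) : (forall i, f i = g i) -> card_nz f = card_nz g.
Proof. by move=> e; apply: eq_card => i; rewrite !inE e. Qed.

Lemma card_nz_perm n (s : {perm 'I_n}) (z : 'I_n -> R) :
  card_nz (fun i => z (s i)) = card_nz z.
Proof. exact: (card_perm_pred s (fun i => if Req_EM_T (z i) 0 then false else true)). Qed.

Definition transfer n (v : 'I_n -> R) (j k : 'I_n) (e : R) : 'I_n -> R :=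
  fun i => v i + ((if i == k then e else 0) - (if i == j then e else 0)).

Definition prefix_sum n (v : 'I_n -> R) (k : nat) : R :=
  \big[Rplus/0]_(i < n | (i < k)%N) v i.

Section Transfer.
Variables (n : nat) (v : 'I_n -> R) (j k : 'I_n) (e : R).
Hypothesis jk : j != k.

Lemma transfer_src : transfer v j k e j = v j - e.
Proof. by rewrite /transfer eqxx (negbTE jk); ring. Qed.

Lemma transfer_dst : transfer v j k e k = v k + e.
Proof. by rewrite /transfer eqxx eq_sym (negbTE jk); ring. Qed.

Lemma transfer_other i : i != j -> i != k -> transfer v j k e i = v i.
Proof. by move=> /negbTE ij /negbTE ik; rewrite /transfer ij ik; ring. Qed.

Lemma sum_transfer (P : pred 'I_n) :
  \big[Rplus/0]_(i | P i) transfer v j k e i =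
  \big[Rplus/0]_(i | P i) v i + ((if P k then e else 0) - (if P j then e else 0)).
Proof.
rewrite big_split /=; congr Rplus.
rewrite /Rminus big_split Rsum_opp /= !Rsum_indicator.
by case: (P j); rewrite ?Ropp_0.
Qed.

Lemma prefix_sum_transfer k' :
  prefix_sum (transfer v j k e) k' =
  prefix_sum v k' + ((if (k < k')%N then e else 0) - (if (j < k')%N then e else 0)).
Proof. exact: sum_transfer. Qed.

End Transfer.

Lemma prefix_sumS n (f : 'I_n -> R) (k : 'I_n) :
  prefix_sum f k.+1 = prefix_sum f k + f k.
Proof.
rewrite /prefix_sum (bigD1 k) //= Rplus_comm; congr Rplus; apply: eq_bigl => i.
case: (eqVneq i k) => [->|h] /=; first by rewrite ltnn andbF.
have h' : nat_of_ord i <> nat_of_ord k by move=> e; move/eqP: h; apply; apply: val_inj.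
by rewrite andbT; apply/idP/idP => hh; lia.
Qed.

Lemma prefix_sum_split n (f : 'I_n -> R) (j : 'I_n) k : (j < k)%N ->
  prefix_sum f k =
  prefix_sum f j + f j + \big[Rplus/0]_(i < n | (j < i)%N && (i < k)%N) f i.
Proof.
move=> hj; rewrite /prefix_sum (bigID (fun i : 'I_n => (i < j)%N)) /= Rplus_assoc.
congr Rplus.
  by apply: eq_bigl => i; apply/idP/idP => [/andP[]//|h]; apply/andP; split => //; lia.
rewrite (bigD1 j) /=; last by rewrite hj ltnn.
congr Rplus; apply: eq_bigl => i.
case: (eqVneq i j) => [->|h] /=; first by rewrite ltnn andbF.
have h' : nat_of_ord i <> nat_of_ord j by move=> e; move/eqP: h; apply; apply: val_inj.
by rewrite andbT; apply/idP/idP => hh; lia.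
Qed.

Lemma majorization_pivot n (u v : 'I_n -> R) (k0 : 'I_n) :
  v k0 < u k0 -> (forall k, (k <= n)%N -> prefix_sum u k <= prefix_sum v k) ->
  exists j k : 'I_n, [/\ (j < k)%N, u j < v j, v k < u k &
    forall i : 'I_n, (j < i)%N -> (i < k)%N -> v i = u i].
Proof.
move=> /RltbP hk0 hpre.
case: (@arg_minnP _ k0 (fun i => Rltb (v i) (u i)) (@nat_of_ord n) hk0) => k /RltbP hk kmin.
have [j0 hj0] : exists j : 'I_n, (j < k)%N && Rltb (u j) (v j).
  apply: NNPP => hno.
  have hle : prefix_sum v k <= prefix_sum u k.
    apply: Rsum_le => j hj; apply: Rnot_lt_le => hh.
    by apply: hno; exists j; rewrite hj; apply/RltbP.
  by have := hpre k.+1 (ltn_ord k); rewrite !prefix_sumS; lra.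
case: (@arg_maxnP _ j0 (fun j : 'I_n => (j < k)%N && Rltb (u j) (v j)) (@nat_of_ord n) hj0).
move=> j /andP[hjk /RltbP hj] jmax.
exists j, k; split=> // i ji ik; apply: Rle_antisym; apply: Rnot_lt_le => /RltbP hh.
  by have := jmax i; rewrite ik hh => /(_ isT); lia.
by have := kmin i hh; lia.
Qed.

Lemma majorization_transfer_step n (u v : 'I_n -> R) :
  (forall i j : 'I_n, (i <= j)%N -> u j <= u i) ->
  (forall k, (k <= n)%N -> prefix_sum u k <= prefix_sum v k) ->
  (exists k0, v k0 < u k0) ->
  exists j k e, [/\ j != k, v k < v j, 0 <= e <= v j - v k,
    (#|[pred i | transfer v j k e i != u i]| < #|[pred i | v i != u i]|)%N &
    forall k', (k' <= n)%N -> prefix_sum u k' <= prefix_sum (transfer v j k e) k'].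
Proof.
move=> u_noninc hpre [k0 hk0].
have [j [k [jk hj hk hmid]]] := majorization_pivot hk0 hpre.
have jk' : j != k by rewrite neq_ltn jk.
have ujk := u_noninc j k (ltnW jk).
set e := Rmin (v j - u j) (u k - v k).
have he1 : e <= v j - u j := Rmin_l _ _.
have he2 : e <= u k - v k := Rmin_r _ _.
have he0 : 0 < e by apply: Rmin_glb_lt; lra.
exists j, k, e; split=> //; [lra|lra| |move=> k' hk'].
  apply: proper_card; apply/properP; split.
    apply/subsetP => i; rewrite !inE; apply: contra => /eqP vu.
    case: (eqVneq i j) => [ij|ij]; first by rewrite ij in vu; lra.
    case: (eqVneq i k) => [ik|ik]; first by rewrite ik in vu; lra.
    by rewrite transfer_other ?vu.
  (* the transfer settles coordinate [j] or coordinate [k] *)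
  case: (Rle_dec (v j - u j) (u k - v k)) => hc.
    exists j; rewrite !inE; first by apply/eqP; lra.
    rewrite transfer_src // /e Rmin_left // (_ : v j - _ = u j) ?eqxx //; ring.
  exists k; rewrite !inE; first by apply/eqP; lra.
  rewrite transfer_dst // /e Rmin_right; last lra.
  by rewrite (_ : v k + _ = u k) ?eqxx //; ring.
rewrite prefix_sum_transfer //; have := hpre k' hk'.
case: (ltnP k k') => kk'; first by rewrite (ltn_trans jk kk'); lra.
case: (ltnP j k') => jk''; last lra.
move=> _; rewrite !(prefix_sum_split _ jk'').
have -> : \big[Rplus/0]_(i < n | (j < i)%N && (i < k')%N) v i =
          \big[Rplus/0]_(i < n | (j < i)%N && (i < k')%N) u i.
  by apply: eq_bigr => i /andP[ji ik']; apply: hmid; lia.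
by have := hpre j (ltnW (ltn_ord j)); lra.
Qed.

Section SymmetricNorm.
Variables (n : nat) (Ns : ('I_n -> R) -> R).
Hypotheses (hN : is_norm Ns) (hS : sign_invariant Ns) (hP : perm_invariant Ns).

Lemma norm_ext f g : (forall i, f i = g i) -> Ns f = Ns g.
Proof. by move=> h; apply: hS => i; rewrite h. Qed.

Lemma norm_scale a f : Ns (fun i => a * f i) = Rabs a * Ns f.
Proof. by case: hN => _ []. Qed.

Lemma norm_triangle f g : Ns (fun i => f i + g i) <= Ns f + Ns g.
Proof. by case: hN => _ []. Qed.

Lemma norm_abs f : Ns (fun i => Rabs (f i)) = Ns f.
Proof. by apply: hS => i; rewrite Rabs_Rabsolu. Qed.

Lemma norm0 : Ns (fun _ => 0) = 0.
Proof.
rewrite (norm_ext (g := fun _ => 0 * 0)); last by move=> i; ring.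
by rewrite norm_scale Rabs_R0 Rmult_0_l.
Qed.

Lemma norm_ge0 f : 0 <= Ns f.
Proof.
have := norm_triangle f (fun i => -1 * f i).
rewrite norm_scale Rabs_Ropp Rabs_R1 (norm_ext (g := fun _ => 0)) ?norm0; first lra.
by move=> i; ring.
Qed.

Lemma norm_convex2 a b lam : 0 <= lam <= 1 ->
  Ns (fun i => lam * a i + (1 - lam) * b i) <= lam * Ns a + (1 - lam) * Ns b.
Proof.
move=> hl; apply: Rle_trans; first exact: norm_triangle.
by rewrite !norm_scale !Rabs_pos_eq; lra.
Qed.

Lemma norm_conic_sum (M : nat) (l : 'I_M -> R) (w : 'I_M -> 'I_n -> R) :
  (forall j, 0 <= l j) ->
  Ns (fun i => \big[Rplus/0]_(j < M) (l j * w j i)) <= \big[Rplus/0]_(j < M) (l j * Ns (w j)).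
Proof.
elim: M l w => [|M IH] l w hl.
  rewrite big_ord0 (norm_ext (g := fun _ => 0)) ?norm0; first lra.
  by move=> i; rewrite big_ord0.
rewrite big_ord_recr /= (norm_ext (g := fun i =>
  \big[Rplus/0]_(j < M) (l (widen_ord (leqnSn M) j) * w (widen_ord (leqnSn M) j) i)
  + l ord_max * w ord_max i)); last by move=> i; rewrite big_ord_recr.
apply: Rle_trans; first exact: norm_triangle.
rewrite norm_scale Rabs_pos_eq //; apply: Rplus_le_compat_r.
exact: IH.
Qed.

Lemma norm_shrink_coord (w : 'I_n -> R) (i0 : 'I_n) c :
  Rabs c <= Rabs (w i0) -> Ns (fun i => if i == i0 then c else w i) <= Ns w.
Proof.
move=> hc; case: (Req_EM_T (w i0) 0) => hw0.
  rewrite (norm_ext (g := w)); first lra.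
  move=> i; case: eqVneq => [->|] //; rewrite hw0.
  by move: hc; rewrite hw0 Rabs_R0 => /Rabs_le0.
pose flip i := if i == i0 then - w i else w i.
have flipE : Ns flip = Ns w.
  by apply: hS => i; rewrite /flip; case: eqVneq => _; rewrite ?Rabs_Ropp.
(* [c] is the convex combination of [w i0] and [- w i0] with weight [lam] *)
pose lam := (1 + c / w i0) / 2.
have hlam : 0 <= lam <= 1 by have := Rdiv_between hw0 hc; rewrite /lam; lra.
apply: Rle_trans (_ : Ns (fun i => lam * w i + (1 - lam) * flip i) <= _).
  right; apply: norm_ext => i; rewrite /flip; case: eqVneq => [->|_]; last ring.
  by rewrite /lam; field.
by apply: Rle_trans (norm_convex2 _ _ hlam) _; rewrite flipE; lra.
Qed.

Lemma norm_monotone a b : (forall i, Rabs (a i) <= Rabs (b i)) -> Ns a <= Ns b.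
Proof.
move=> hab.
suff H : forall s : seq 'I_n, Ns (fun i => if i \in s then a i else b i) <= Ns b.
  by rewrite (norm_ext (g := fun i => if i \in enum 'I_n then a i else b i)) => [|i];
    rewrite ?mem_enum.
elim=> [|i0 s IH]; first by rewrite (norm_ext (g := b)) => [|i]; [lra|rewrite in_nil].
apply: Rle_trans IH.
rewrite (norm_ext (g := fun i => if i == i0 then a i0 else if i \in s then a i else b i)).
  by apply: norm_shrink_coord; case: ifP => _; [lra|exact: hab].
by move=> i; rewrite in_cons; case: eqVneq => [->|].
Qed.

Lemma norm_transfer (v : 'I_n -> R) (j k : 'I_n) e : j != k ->
  v k < v j -> 0 <= e <= v j - v k -> Ns (transfer v j k e) <= Ns v.
Proof.
move=> jk hv he.
pose sw i := if i == j then k else if i == k then j else i.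
have swK : cancel sw sw.
  move=> i; rewrite /sw; case: (eqVneq i j) => [->|ij].
    by rewrite eqxx eq_sym (negbTE jk).
  by case: (eqVneq i k) => [->|ik]; rewrite ?eqxx // (negbTE ij) (negbTE ik).
(* a Robin Hood transfer is a convex combination of [v] and [v] with [j], [k] swapped *)
pose lam := e / (v j - v k).
have hlam : 0 <= lam <= 1.
  split; first by apply: Rmult_le_pos; [lra|apply/Rlt_le/Rinv_0_lt_compat; lra].
  by apply: (Rmult_le_reg_r (v j - v k)); [lra|rewrite /lam /Rdiv Rmult_assoc Rinv_l; lra].
apply: Rle_trans (_ : Ns (fun i => lam * v (sw i) + (1 - lam) * v i) <= _).
  right; apply: norm_ext => i; rewrite /sw.
  case: (eqVneq i j) => [->|ij]; first by rewrite transfer_src /lam //; field; lra.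
  case: (eqVneq i k) => [->|ik]; first by rewrite transfer_dst /lam //; field; lra.
  by rewrite transfer_other //; ring.
apply: Rle_trans (norm_convex2 _ _ hlam) _.
by rewrite hP; [lra|exists sw].
Qed.

Lemma norm_weak_majorization (u v : 'I_n -> R) :
  (forall i, 0 <= u i) -> (forall i j : 'I_n, (i <= j)%N -> u j <= u i) ->
  (forall k, (k <= n)%N -> prefix_sum u k <= prefix_sum v k) ->
  Ns u <= Ns v.
Proof.
move=> u0 u_noninc.
suff H : forall N v, (#|[pred i | v i != u i]| < N)%N ->
    (forall k, (k <= n)%N -> prefix_sum u k <= prefix_sum v k) -> Ns u <= Ns v.
  exact: H.
elim=> [//|N IH] {}v hdiff hpre.
case: (classic (exists k0, v k0 < u k0)) => [hlt|hge]; last first.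
  apply: norm_monotone => i; have hi : u i <= v i.
    by apply: Rnot_lt_le => h; apply: hge; exists i.
  by have := u0 i => ?; rewrite !Rabs_pos_eq; lra.
have [j [k [e [jk hv he hcard hpre']]]] := majorization_transfer_step u_noninc hpre hlt.
apply: Rle_trans (norm_transfer jk hv he); apply: IH hpre'.
by apply: leq_trans hcard _; rewrite -ltnS.
Qed.

End SymmetricNorm.

Definition Rgeb (a b : R) : bool := if Rle_dec b a then true else false.

Lemma RgebP a b : reflect (b <= a) (Rgeb a b).
Proof. by rewrite /Rgeb; case: Rle_dec => h; constructor. Qed.

Lemma Rgeb_total : total Rgeb.
Proof. by move=> a b; case: (Rle_dec a b) => h; apply/orP; [right|left]; apply/RgebP; lra. Qed.

Lemma Rgeb_trans : transitive Rgeb.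
Proof. by move=> b a c /RgebP h1 /RgebP h2; apply/RgebP; lra. Qed.

Lemma Rgeb_refl : reflexive Rgeb.
Proof. by move=> a; apply/RgebP; lra. Qed.

Section AbsSorted.
Variables (n : nat) (x : 'I_n -> R).

Lemma abs_sorted_perm : perm_eq (abs_sorted x) (mktuple (fun i => Rabs (x i))).
Proof. by rewrite /abs_sorted perm_sort. Qed.

Lemma size_abs_sorted : size (abs_sorted x) = n.
Proof. by rewrite (perm_size abs_sorted_perm) size_tuple. Qed.

Lemma absx_perm : exists s : {perm 'I_n}, forall i : 'I_n, absx x i = Rabs (x (s i)).
Proof.
case/tuple_permP: abs_sorted_perm => s hs; exists s => i.
by rewrite /absx hs nth_mktuple tnth_mktuple.
Qed.

Lemma absx_ge0 k : 0 <= absx x k.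
Proof.
case: (ltnP k n) => hk; last by rewrite /absx nth_default ?size_abs_sorted //; lra.
by case: absx_perm => s /(_ (Ordinal hk)) ->; exact: Rabs_pos.
Qed.

Lemma absx_nonincr i j : (i <= j)%N -> absx x j <= absx x i.
Proof.
move=> ij; case: (ltnP j n) => hj; last first.
  by rewrite {1}/absx nth_default ?size_abs_sorted //; exact: absx_ge0.
apply/RgebP; apply: (sorted_leq_nth Rgeb_trans Rgeb_refl) => //.
- exact: (sort_sorted Rgeb_total).
- by rewrite inE size_abs_sorted; lia.
- by rewrite inE size_abs_sorted.
Qed.

Lemma absx_le_of_card k c : 0 <= c ->
  (#|[pred i | Rltb c (Rabs (x i))]| <= k)%N -> absx x k <= c.
Proof.
move=> hc hcard; apply: Rnot_lt_le => hlt.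
case: (ltnP k n) => hk; last by move: hlt; rewrite /absx nth_default ?size_abs_sorted //; lra.
case: absx_perm => s hs.
have : (#|[pred i | ((s^-1)%g i < k.+1)%N]| <= #|[pred i | Rltb c (Rabs (x i))]|)%N.
  apply: subset_leq_card; apply/subsetP => i; rewrite !inE => hi.
  apply/RltbP; have := hs ((s^-1)%g i); rewrite permKV => <-.
  by apply: (Rlt_le_trans _ _ _ hlt); apply: absx_nonincr; lia.
by rewrite (card_perm_pred (s^-1)%g (fun i : 'I_n => (i < k.+1)%N)) card_ord_lt //; lia.
Qed.

End AbsSorted.

Lemma foldl_first_argmin (f : nat -> R) r : forall s b, (b < s)%N ->
  (forall k, (k < s)%N -> f b <= f k) -> (forall k, (k < b)%N -> f b < f k) ->
  let b' := foldl (fun best k => if Rlt_dec (f k) (f best) then k else best) b (iota s r) in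
  [/\ (b' < s + r)%N, forall k, (k < s + r)%N -> f b' <= f k &
      forall k, (k < b')%N -> f b' < f k].
Proof.
elim: r => [|r IH] s b hb h1 h2 /=; first by rewrite addn0.
rewrite addnS -addSn; case: Rlt_dec => hl.
  apply: IH => // k hk; last by have := h1 k hk; lra.
  case: (ltnP k s) => hks; first by have := h1 k hks; lra.
  by rewrite (_ : k = s); [lra|lia].
apply: IH => //; first lia.
by move=> k hk; case: (ltnP k s) => hks; [apply: h1|rewrite (_ : k = s); [lra|lia]].
Qed.

Lemma mean_insert_gap a S m : 0 < m ->
  a - (a + S) / (m + 1) = m * ((a + S) / (m + 1) - S / m).
Proof. by move=> hm; field; lra. Qed.

Section FirstMinimizer.
Variables (n K : nat) (x : 'I_n -> R).
Hypotheses (hK1 : (1 < K)%N) (hKn : (K < n)%N).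

Local Notation p := (ix K x).

Lemma ix_spec : [/\ (p < K)%N, forall k, (k < K)%N -> sx K x p <= sx K x k &
  forall k, (k < p)%N -> sx K x p < sx K x k].
Proof.
have := @foldl_first_argmin (sx K x) (K - 1) 1 0 (ltn0Sn 0).
rewrite /ix (_ : (1 + (K - 1) = K)%N); last by lia.
by apply => k hk; [have -> : k = 0%N by lia|]; [lra|lia].
Qed.

Definition tail_sum k := \big[Rplus/0]_(k <= j < n) absx x j.

Definition tail_len := (K - p)%N.

Lemma sxE k : sx K x k = tail_sum k / INR (K - k).
Proof. by []. Qed.

Lemma tail_sum_ge0 k : 0 <= tail_sum k.
Proof. by apply: Rsum_ge0 => i _; exact: absx_ge0. Qed.

Lemma tail_sumS k : (k < n)%N -> tail_sum k = absx x k + tail_sum k.+1.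
Proof. by move=> hk; rewrite /tail_sum big_ltn. Qed.

Lemma tail_len_gt0 : 0 < INR tail_len.
Proof. by case: ix_spec => hp _ _; apply: lt_0_INR; rewrite /tail_len; lia. Qed.

Lemma tail_sum_ix : tail_sum p = INR tail_len * delta K x.
Proof. by rewrite /delta sxE -/tail_len; field; have := tail_len_gt0; lra. Qed.

Lemma delta_ge0 : 0 <= delta K x.
Proof.
apply: Rmult_le_pos; first exact: tail_sum_ge0.
by apply/Rlt_le/Rinv_0_lt_compat; exact: tail_len_gt0.
Qed.

Lemma delta_lt_absx_pred : (0 < p)%N -> delta K x < absx x p.-1.
Proof.
move=> hp; case: ix_spec => hpK _ /(_ p.-1 (ltac:(lia))).
rewrite /delta !sxE (tail_sumS (_ : p.-1 < n)%N); last by lia.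
have -> : p.-1.+1 = p by lia.
have -> : (K - p.-1 = tail_len.+1)%N by rewrite /tail_len; lia.
rewrite S_INR -/tail_len => hd.
have := mean_insert_gap (absx x p.-1) (tail_sum p) tail_len_gt0.
have := Rmult_lt_0_compat _ _ tail_len_gt0 (Rgt_minus _ _ hd); lra.
Qed.

Lemma absx_ix_le_delta : absx x p <= delta K x.
Proof.
case: ix_spec => hpK hmin _.
have hS : tail_sum p = absx x p + tail_sum p.+1 by apply: tail_sumS; lia.
rewrite /delta !sxE hS.
case: (ltnP p.+1 K) => hp1; last first.
  by rewrite (_ : (K - p = 1)%N) /= ?Rdiv_1_r; [have := tail_sum_ge0 p.+1; lra|lia].
have := hmin p.+1 hp1; rewrite !sxE hS.
have -> : (K - p = (K - p.+1).+1)%N by lia.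
rewrite S_INR.
have hm : 0 < INR (K - p.+1) by apply: lt_0_INR; lia.
move=> hd; have := mean_insert_gap (absx x p) (tail_sum p.+1) hm.
have := Rmult_le_compat_l _ _ _ (Rlt_le _ _ hm) (Rle_minus _ _ hd); lra.
Qed.

Lemma absx_le_delta k : (p <= k)%N -> absx x k <= delta K x.
Proof. by move=> h; apply: Rle_trans absx_ix_le_delta; exact: absx_nonincr. Qed.

Lemma delta_le_absx k : (k < p)%N -> delta K x <= absx x k.
Proof.
move=> h; apply/Rlt_le/(Rlt_le_trans _ _ _ (delta_lt_absx_pred _)); first lia.
by apply: absx_nonincr; lia.
Qed.

Definition useq k := if (k < p)%N then absx x k else if (k < K)%N then delta K x else 0.

Lemma useq_ge0 k : 0 <= useq k.
Proof.
rewrite /useq; case: ifP => _; first exact: absx_ge0.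
by case: ifP => _; [exact: delta_ge0|lra].
Qed.

Lemma useq_nonincr i j : (i <= j)%N -> useq j <= useq i.
Proof.
move=> ij; have d0 := delta_ge0; rewrite /useq.
case: (ltnP i p) => ip.
  by case: (ltnP j p) => jp; [exact: absx_nonincr|have := delta_le_absx ip; case: ifP; lra].
rewrite (_ : (j < p)%N = false); last by apply/negbTE; rewrite -leqNgt; lia.
case: (ltnP i K) => iK; first by case: ifP; lra.
by rewrite (_ : (j < K)%N = false); [lra|apply/negbTE; rewrite -leqNgt; lia].
Qed.

Lemma sum_absx_split :
  \big[Rplus/0]_(0 <= i < n) absx x i =
  \big[Rplus/0]_(0 <= i < p) absx x i + INR tail_len * delta K x.
Proof.
case: ix_spec => hpK _ _.
by rewrite -tail_sum_ix /tail_sum -big_cat_nat //; lia.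
Qed.

Lemma sum_useq_head k : (k <= p)%N ->
  \big[Rplus/0]_(0 <= i < k) useq i = \big[Rplus/0]_(0 <= i < k) absx x i.
Proof.
by move=> kp; apply: eq_big_nat => i /andP[_ ik]; rewrite /useq (leq_trans ik kp).
Qed.

Lemma sum_useq_mid k : (p <= k <= K)%N ->
  \big[Rplus/0]_(0 <= i < k) useq i =
  \big[Rplus/0]_(0 <= i < p) absx x i + INR (k - p) * delta K x.
Proof.
move=> /andP[pk kK]; rewrite (big_cat_nat (leq0n p) pk) sum_useq_head // -Rsum_const_nat.
congr Rplus; apply: eq_big_nat => i /andP[pi ik].
by rewrite /useq ltnNge pi (leq_trans ik kK).
Qed.

Lemma sum_useq_tail k : (K <= k)%N ->
  \big[Rplus/0]_(0 <= i < k) useq i =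
  \big[Rplus/0]_(0 <= i < p) absx x i + INR tail_len * delta K x.
Proof.
case: ix_spec => hpK _ _ Kk.
rewrite (big_cat_nat (leq0n K) Kk) sum_useq_mid; last by apply/andP; split=> //; lia.
rewrite [X in _ + X = _]big1_seq ?Rplus_0_r // => i /andP[_]; rewrite mem_index_iota => /andP[Ki _].
by rewrite /useq !ltnNge Ki (leq_trans (ltnW hpK) Ki).
Qed.

End FirstMinimizer.

Lemma prefix_sum_nat n (f : nat -> R) k : (k <= n)%N ->
  prefix_sum (fun i : 'I_n => f i) k = \big[Rplus/0]_(0 <= i < k) f i.
Proof. by move=> hk; rewrite /prefix_sum -(big_ord_widen n f hk) big_mkord. Qed.

Lemma prefix_sum_perm_le n (b : nat -> R) (t : {perm 'I_n}) k : (k <= n)%N ->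
  (forall i j, (i <= j)%N -> b j <= b i) ->
  prefix_sum (fun i => b (t i)) k <= prefix_sum (fun i : 'I_n => b i) k.
Proof.
move=> hk hb; rewrite /prefix_sum (reindex_inj (@perm_inj _ (t^-1)%g)) /=.
under eq_bigr => i _ do rewrite permKV.
rewrite big_mkcond [X in _ <= X]big_mkcond /=.
(* exchanging the index sets only trades values >= b k.-1 for values <= b k.-1 *)
have H i : (if ((t^-1)%g i < k)%N then b i else 0) - (if (i < k)%N then b i else 0)
    <= (if ((t^-1)%g i < k)%N then b k.-1 else 0) - (if (i < k)%N then b k.-1 else 0).
  case: (ltnP i k) => h1; case: (ltnP ((t^-1)%g i) k) => h2; try lra.
    by have := hb i k.-1 (ltac:(lia)); lra.
  by have := hb k.-1 i (ltac:(lia)); lra.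
have := @Rsum_le _ (index_enum 'I_n) xpredT _ _ (fun i _ => H i).
rewrite /Rminus !big_split !Rsum_opp /= -!big_mkcond !Rsum_const.
by rewrite (card_perm_pred (t^-1)%g (fun i : 'I_n => (i < k)%N)) card_ord_lt //; lra.
Qed.

Lemma sparse_absx_eq0 n K (z : 'I_n -> R) : (card_nz z <= K)%N ->
  forall k, (K <= k)%N -> absx z k = 0.
Proof.
move=> hz k hk; apply: Rle_antisym; last exact: absx_ge0.
by apply: absx_le_of_card; [lra|rewrite -card_nzE; lia].
Qed.

Lemma nonincr_prefix_mean (v : nat -> R) p k K :
  (forall i j, (i <= j)%N -> v j <= v i) -> (p <= k <= K)%N ->
  INR (k - p) * \big[Rplus/0]_(p <= i < K) v i <= INR (K - p) * \big[Rplus/0]_(p <= i < k) v i.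
Proof.
move=> hv /andP[pk kK].
rewrite (big_cat_nat pk kK) /= (_ : (K - p = (k - p) + (K - k))%N) ?plus_INR; last by lia.
have h1 : INR (k - p) * v k <= \big[Rplus/0]_(p <= i < k) v i.
  by rewrite -Rsum_const_nat; apply: Rsum_le_nat => i /andP[_ ik]; apply: hv; lia.
have h2 : \big[Rplus/0]_(k <= i < K) v i <= INR (K - k) * v k.
  by rewrite -Rsum_const_nat; apply: Rsum_le_nat => i /andP[ki _]; apply: hv.
have := pos_INR (k - p); have := pos_INR (K - k); nra.
Qed.

Section LowerBound.
Variables (n K : nat) (Ns : ('I_n -> R) -> R).
Hypotheses (hK1 : (1 < K)%N) (hKn : (K < n)%N).
Hypotheses (hN : is_norm Ns) (hS : sign_invariant Ns) (hP : perm_invariant Ns).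

Lemma norm_absx z : Ns (fun i => absx z i) = Ns z.
Proof.
case: (absx_perm z) => s hs.
rewrite (norm_ext hS (g := fun i => Rabs (z (s i)))) // norm_abs //.
exact: hP (perm_bijective s).
Qed.

Variables (x : 'I_n -> R) (M : nat) (l : 'I_M -> R) (z : 'I_M -> 'I_n -> R).
Hypotheses (hl : forall j, 0 <= l j) (hz : forall j, (card_nz (z j) <= K)%N).
Hypothesis hx : forall i, x i = \big[Rplus/0]_(j < M) (l j * z j i).

Definition mixed_profile k := \big[Rplus/0]_(j < M) (l j * absx (z j) k).

Lemma mixed_profile_nonincr i j : (i <= j)%N -> mixed_profile j <= mixed_profile i.
Proof. by move=> h; apply: Rsum_le => k _; apply: Rmult_le_compat_l => //; exact: absx_nonincr. Qed.

Lemma sum_mixed_profile_stable k : (K <= k)%N ->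
  \big[Rplus/0]_(0 <= i < k) mixed_profile i = \big[Rplus/0]_(0 <= i < K) mixed_profile i.
Proof.
move=> Kk; rewrite (big_cat_nat (leq0n K) Kk) /= [X in _ + X]big1_seq ?Rplus_0_r //.
move=> i /andP[_]; rewrite mem_index_iota => /andP[Ki _].
by rewrite /mixed_profile big1 // => j _; rewrite (sparse_absx_eq0 (hz j) Ki); ring.
Qed.

Lemma sum_absx_le_mixed k : (k <= n)%N ->
  \big[Rplus/0]_(0 <= i < k) absx x i <= \big[Rplus/0]_(0 <= i < k) mixed_profile i.
Proof.
move=> hk; case: (absx_perm x) => s hs.
rewrite -!(prefix_sum_nat _ hk) /prefix_sum.
under eq_bigr => i _ do rewrite hs hx.
apply: Rle_trans (_ : \big[Rplus/0]_(i < n | (i < k)%N)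
  \big[Rplus/0]_(j < M) (l j * Rabs (z j (s i))) <= _).
  apply: Rsum_le => i _; apply: Rle_trans (Rsum_abs _ _ _) _.
  by right; apply: eq_bigr => j _; rewrite Rabs_mult Rabs_pos_eq.
rewrite exchange_big [X in _ <= X]exchange_big /=.
apply: Rsum_le => j _; rewrite -!big_distrr /=; apply: Rmult_le_compat_l => //.
case: (absx_perm (z j)) => r hr.
have e i : Rabs (z j (s i)) = absx (z j) ((s / r)%g i) by rewrite hr permM permKV.
under eq_bigr => i _ do rewrite e.
exact: (prefix_sum_perm_le _ hk (fun i1 i2 h => absx_nonincr (z j) h)).
Qed.

Lemma sum_useq_le_mixed k : (k <= n)%N ->
  \big[Rplus/0]_(0 <= i < k) useq K x i <= \big[Rplus/0]_(0 <= i < k) mixed_profile i.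
Proof.
move=> hk; case: (ix_spec x hK1 hKn) => hpK _ _.
case: (leqP k (ix K x)) => kp; first by rewrite sum_useq_head //; exact: sum_absx_le_mixed.
have hVp := sum_absx_le_mixed (ltnW (ltn_trans hpK hKn)).
have hVK := sum_absx_le_mixed (leqnn n).
rewrite (sum_absx_split x hK1 hKn) (sum_mixed_profile_stable (ltnW hKn)) in hVK.
case: (leqP k K) => kK; last first.
  by rewrite sum_useq_tail ?(ltnW kK) // sum_mixed_profile_stable // (ltnW kK).
have := nonincr_prefix_mean mixed_profile_nonincr (_ : ix K x <= k <= K)%N.
move=> /(_ (ltac:(lia))); rewrite -/(tail_len K x) => chord.
rewrite sum_useq_mid ?(ltnW kp) // (big_cat_nat (leq0n _) (ltnW kp)) /=.
rewrite (big_cat_nat (leq0n _) (ltnW hpK)) /= in hVK.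
have hm := tail_len_gt0 x hK1 hKn; have hq := pos_INR (k - ix K x).
have hqm : INR (k - ix K x) <= INR (tail_len K x) by apply: le_INR; rewrite /tail_len; lia.
set m := INR (tail_len K x) in hm hqm hVK chord *.
set q := INR (k - ix K x) in hq hqm chord *.
(* with [A] the head sum of [|x|] and [V] that of the mixed profile:
   [m (A + q d) <= (m - q) V_p + q (V_p + S_[p,K)) <= m (V_p + S_[p,k))] *)
have h1 := Rmult_le_compat_l q _ _ hq hVK.
have h2 := Rmult_le_compat_l (m - q) _ _ (ltac:(lra)) hVp.
by apply: (Rmult_le_reg_l _ _ _ hm); lra.
Qed.

Lemma norm_u_le_conic_comb : Ns (u K x) <= \big[Rplus/0]_(j < M) (l j * Ns (z j)).
Proof.
apply: Rle_trans (_ : Ns (fun i => mixed_profile i) <= _).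
  apply: (norm_weak_majorization hN hS hP) => [i|i j|k hk].
  - exact: useq_ge0.
  - exact: useq_nonincr.
  - by rewrite (prefix_sum_nat (useq K x) hk) prefix_sum_nat //; exact: sum_useq_le_mixed.
apply: Rle_trans (norm_conic_sum hN hS (fun j i => absx (z j) i) hl) _.
by right; apply: eq_bigr => j _; rewrite norm_absx.
Qed.

End LowerBound.

Lemma norm_u_le_of_conv_NK n K (Ns : ('I_n -> R) -> R) :
  (1 < K)%N -> (K < n)%N -> is_norm Ns -> sign_invariant Ns -> perm_invariant Ns ->
  forall (x : 'I_n -> R) t, 0 < t -> conv (NK K Ns) (fun i => x i / t) -> Ns (u K x) <= t.
Proof.
move=> hK1 hKn hN hS hP x t ht [M [l [q [hl [hl1 [hq hx]]]]]].
have hz j : (card_nz (fun i => (t * q j i)%R) <= K)%N.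
  by rewrite card_nz_scale; [exact: (hq j).2|lra].
have hx' i : x i = \big[Rplus/0]_(j < M) (l j * (t * q j i)).
  rewrite (_ : x i = t * (x i / t)); last by field; lra.
  by move: (hx i) => /= ->; rewrite /Rsum big_distrr; apply: eq_bigr => j _ /=; ring.
apply: Rle_trans (norm_u_le_conic_comb hK1 hKn hN hS hP hl hz hx') _.
apply: Rle_trans (_ : \big[Rplus/0]_(j < M) (l j * t) <= _).
  apply: Rsum_le => j _; apply: Rmult_le_compat_l => //.
  rewrite norm_scale // Rabs_pos_eq; last lra.
  rewrite -[X in _ <= X]Rmult_1_r; apply: Rmult_le_compat_l; [lra|exact: (hq j).1].
by rewrite -big_distrl /=; move: hl1; rewrite /Rsum => ->; lra.
Qed.

Lemma conv_mem n (S : ('I_n -> R) -> Prop) y : S y -> conv S y.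
Proof.
move=> hy; exists 1%N, (fun _ => 1), (fun _ => y); split; [move=> _; lra|split].
  by rewrite /Rsum big_ord1.
by split=> // i; rewrite /Rsum big_ord1 Rmult_1_l.
Qed.

Lemma conv_ext n (S : ('I_n -> R) -> Prop) y y' :
  (forall i, y i = y' i) -> conv S y -> conv S y'.
Proof.
move=> e [M [l [p [h1 [h2 [h3 h4]]]]]]; exists M, l, p.
by do 3 (split=> //); move=> i; rewrite -e.
Qed.

Lemma conv_convex2 n (S : ('I_n -> R) -> Prop) a b mu : 0 <= mu <= 1 ->
  conv S a -> conv S b -> conv S (fun i => mu * a i + (1 - mu) * b i).
Proof.
move=> hmu [M1 [l1 [p1 [h11 [h12 [h13 h14]]]]]] [M2 [l2 [p2 [h21 [h22 [h23 h24]]]]]].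
exists (M1 + M2)%N.
exists (fun j => match split j with inl j1 => mu * l1 j1 | inr j2 => (1 - mu) * l2 j2 end).
exists (fun j => match split j with inl j1 => p1 j1 | inr j2 => p2 j2 end).
have sl (j1 : 'I_M1) : split (lshift M2 j1) = inl j1.
  by rewrite -[lshift _ _]/(unsplit (inl j1)) unsplitK.
have sr (j2 : 'I_M2) : split (rshift M1 j2) = inr j2.
  by rewrite -[rshift _ _]/(unsplit (inr j2)) unsplitK.
split; first by move=> j; case: split => j'; apply: Rmult_le_pos => //; lra.
split.
  rewrite /Rsum big_split_ord /= (eq_bigr (fun j => mu * l1 j)) => [|j _]; last by rewrite sl.
  rewrite [X in _ + X](eq_bigr (fun j => (1 - mu) * l2 j)) => [|j _]; last by rewrite sr.
  by rewrite -!big_distrr /=; move: h12 h22; rewrite /Rsum => -> ->; ring.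
split; first by move=> j; case: split.
move=> i; rewrite h14 h24 /Rsum [RHS]big_split_ord /= !big_distrr /=.
by congr Rplus; apply: eq_bigr => j _; rewrite ?sl ?sr; ring.
Qed.

Lemma conv_affine_image n (S S' : ('I_n -> R) -> Prop) (h s : 'I_n -> R)
    (pi : 'I_n -> 'I_n) c :
  conv S c -> (forall w, S w -> S' (fun i => h i + s i * w (pi i))) ->
  conv S' (fun i => h i + s i * c (pi i)).
Proof.
move=> [M [l [q [h1 [h2 [h3 h4]]]]]] hS.
exists M, l, (fun j i => h i + s i * q j (pi i)); do 2 (split=> //).
split=> [j|i]; first exact: hS. rewrite h4 /Rsum.
rewrite [RHS](eq_bigr (fun j => h i * l j + s i * (l j * q j (pi i)))) => [|j _]; last by ring.
rewrite big_split -!big_distrr /=.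
by move: h2; rewrite /Rsum => ->; rewrite Rmult_1_r.
Qed.

Definition in_box n (d : R) (c : 'I_n -> R) : Prop := forall i, 0 <= c i <= d.

Definition box_sparse n (m : nat) (d : R) (w : 'I_n -> R) : Prop :=
  in_box d w /\ (#|[pred i | w i != 0%R]| <= m)%N.

Definition frac_coords n (d : R) (c : 'I_n -> R) :=
  [pred i | Rltb 0 (c i) && Rltb (c i) d].

Definition max_transfer n (d : R) (c : 'I_n -> R) (j k : 'I_n) :=
  transfer c j k (Rmin (c j) (d - c k)).

Section MaxTransfer.
Variables (n : nat) (d : R) (c : 'I_n -> R) (j k : 'I_n).
Hypotheses (jk : j != k) (hc : in_box d c).

Lemma max_transfer_in_box : in_box d (max_transfer d c j k).
Proof.
have := Rmin_l (c j) (d - c k); have := Rmin_r (c j) (d - c k).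
have := Rmin_glb (c j) (d - c k) 0 (proj1 (hc j)) (ltac:(have := hc k; lra)).
move=> h0 h1 h2 i; rewrite /max_transfer.
case: (eqVneq i j) => [->|ij]; first by rewrite transfer_src //; have := hc j; lra.
case: (eqVneq i k) => [->|ik]; first by rewrite transfer_dst //; have := hc k; lra.
by rewrite transfer_other //; exact: hc.
Qed.

Lemma sum_max_transfer : \big[Rplus/0]_i max_transfer d c j k i = \big[Rplus/0]_i c i.
Proof. by rewrite /max_transfer sum_transfer; ring. Qed.

Lemma card_frac_max_transfer : j \in frac_coords d c -> k \in frac_coords d c ->
  (#|frac_coords d (max_transfer d c j k)| < #|frac_coords d c|)%N.
Proof.
move=> hj hk; have := hj; have := hk; rewrite !inE => /andP[/RltbP k0 /RltbP kd].
move=> /andP[/RltbP j0 /RltbP jd]; apply: proper_card; apply/properP; split.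
  apply/subsetP => i; case: (eqVneq i j) => [->|ij] //.
  case: (eqVneq i k) => [->|ik] //.
  by rewrite !inE /max_transfer transfer_other.
(* the transfer empties [j] or fills [k] *)
case: (Rle_dec (c j) (d - c k)) => hjk.
  exists j => //; rewrite inE /max_transfer transfer_src // Rmin_left //.
  by apply/negP => /andP[/RltbP]; lra.
exists k => //; rewrite inE /max_transfer transfer_dst // Rmin_right; last lra.
by apply/negP => /andP[_ /RltbP]; lra.
Qed.

End MaxTransfer.

Lemma transfer_convex_split n (c : 'I_n -> R) (j k : 'I_n) a b :
  j != k -> 0 < a -> 0 < b -> forall i,
  c i = b / (a + b) * transfer c j k a i + (1 - b / (a + b)) * transfer c k j b i.
Proof.
move=> jk ha hb i.
case: (eqVneq i j) => [->|ij].
  by rewrite transfer_src // transfer_dst 1?eq_sym //; field; lra.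
case: (eqVneq i k) => [->|ik].
  by rewrite transfer_dst // transfer_src 1?eq_sym //; field; lra.
by rewrite !transfer_other //; field; lra.
Qed.

Lemma box_sparse_of_few_frac n (m : nat) (d : R) (c : 'I_n -> R) : 0 <= d ->
  in_box d c -> \big[Rplus/0]_i c i <= INR m * d ->
  (#|frac_coords d c| <= 1)%N -> box_sparse m d c.
Proof.
move=> hd hc hs hF; split=> //.
case: (Req_EM_T d 0) => hd0.
  rewrite (_ : #|_| = 0%N) //; apply: eq_card0 => i; rewrite !inE.
  by apply/negbTE/negPn/eqP; have := hc i; lra.
set E := [pred i | c i == d].
have hsub : (#|[pred i | c i != 0%R]| <= #|E| + #|frac_coords d c|)%N.
  rewrite -cardUI; apply: leq_trans (leq_addr _ _); apply: subset_leq_card.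
  apply/subsetP => i; rewrite !inE => /eqP hi; have := hc i => hci.
  case: (eqVneq (c i) d) => //= e; apply/andP; split; apply/RltbP => //; first lra.
  by case: (Rle_lt_or_eq_dec _ _ (proj2 hci)) => // ci; rewrite ci eqxx in e.
have hsplit : \big[Rplus/0]_i c i = INR #|E| * d + \big[Rplus/0]_(i | ~~ E i) c i.
  rewrite (bigID E) /= (eq_bigr (fun _ => d)) => [|i /eqP] //.
  by rewrite Rsum_const; congr (INR _ * _ + _); apply: eq_card => i; rewrite !inE.
have hrest : 0 <= \big[Rplus/0]_(i | ~~ E i) c i by apply: Rsum_ge0 => i _; have := hc i; lra.
have hdp : 0 < d by lra.
case: (posnP #|frac_coords d c|) => hF0.
  apply: leq_trans hsub _; rewrite hF0 addn0; apply/leP/INR_le.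
  by apply: (Rmult_le_reg_r d) => //; lra.
(* a fractional coordinate is not full, so fewer than [m] coordinates are full *)
case/card_gt0P: hF0 => e; rewrite inE => /andP[/RltbP he0 /RltbP hed].
have : c e <= \big[Rplus/0]_(i | ~~ E i) c i.
  rewrite (bigD1 e) /=; last by apply/eqP; lra.
  apply: Rle_trans (_ : c e + 0 <= _); first lra.
  by apply: Rplus_le_compat_l; apply: Rsum_ge0 => i _; exact: (proj1 (hc i)).
move=> hce; apply: leq_trans hsub _.
have : (#|E| < m)%N by apply/ltP/INR_lt; apply: (Rmult_lt_reg_r d) => //; lra.
by lia.
Qed.

Lemma hypersimplex_conv n (m : nat) (d : R) (c : 'I_n -> R) : 0 <= d ->
  in_box d c -> \big[Rplus/0]_i c i <= INR m * d -> conv (box_sparse m d) c.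
Proof.
move=> hd; move: (ltnSn #|frac_coords d c|); move: {-1}#|_|.+1 => N.
elim: N c => [//|N IH] c hN hc hs.
case: (leqP #|frac_coords d c| 1) => hF1.
  exact/conv_mem/box_sparse_of_few_frac.
case/card_gt1P: hF1 => i1 [i2 [h1 h2 i12]].
have i21 : i2 != i1 by rewrite eq_sym.
have h1' := h1; have h2' := h2; move: h1' h2'; rewrite !inE.
move=> /andP[/RltbP a1 /RltbP b1] /andP[/RltbP a2 /RltbP b2].
have IH' j k : j != k -> j \in frac_coords d c -> k \in frac_coords d c ->
    conv (box_sparse m d) (max_transfer d c j k).
  move=> jk hj hk; apply: IH; first by have := card_frac_max_transfer jk hj hk; lia.
    exact: max_transfer_in_box.
  by rewrite sum_max_transfer.
pose a := Rmin (c i2) (d - c i1); pose b := Rmin (c i1) (d - c i2).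
have ha : 0 < a by apply: Rmin_glb_lt; lra.
have hb : 0 < b by apply: Rmin_glb_lt; lra.
have hmu : 0 <= b / (a + b) <= 1.
  split; first by apply: Rmult_le_pos; [lra|apply/Rlt_le/Rinv_0_lt_compat; lra].
  by apply: (Rmult_le_reg_r (a + b)); [lra|rewrite /Rdiv Rmult_assoc Rinv_l; lra].
apply: conv_ext (conv_convex2 hmu (IH' _ _ i21 h2 h1) (IH' _ _ i12 h1 h2)) => i.
by rewrite [RHS](transfer_convex_split c i21 ha hb).
Qed.

Lemma card_ord_lt_and n k (P : pred 'I_n) : (k <= n)%N ->
  (#|[pred i : 'I_n | (i < k)%N && P i]| <= k)%N.
Proof.
move=> hk; rewrite -[X in (_ <= X)%N](card_ord_lt hk); apply: subset_leq_card.
by apply/subsetP => i; rewrite !inE => /andP[].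
Qed.

Lemma card_gt_box_sparse n m d (w : 'I_n -> R) (P : pred 'I_n) th :
  box_sparse m d w -> 0 <= th -> (#|[pred i | P i && Rltb th (w i)]| <= m)%N.
Proof.
move=> [_ hw] hth; apply: leq_trans hw; apply: subset_leq_card.
by apply/subsetP => i; rewrite !inE => /andP[_ /RltbP h]; apply/eqP; lra.
Qed.

Lemma card_gt_box_eq0 n d (w : 'I_n -> R) (P : pred 'I_n) th :
  in_box d w -> d <= th -> #|[pred i | P i && Rltb th (w i)]| = 0%N.
Proof.
move=> hw hth; apply: eq_card0 => i; rewrite !inE.
by apply/negbTE/negP => /andP[_ /RltbP]; have := hw i; lra.
Qed.

Definition sign_of (a : R) : R := if Rlt_dec a 0 then -1 else 1.

Lemma sign_of_mul_abs a : sign_of a * Rabs a = a.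
Proof.
rewrite /sign_of; case: Rlt_dec => h /=; first by rewrite Rabs_left //; ring.
by rewrite Rabs_pos_eq; [ring|lra].
Qed.

Lemma Rabs_sign_of a : Rabs (sign_of a) = 1.
Proof. by rewrite /sign_of; case: Rlt_dec => h /=; rewrite ?Rabs_Ropp Rabs_R1. Qed.

Section UpperBound.
Variables (n K : nat) (Ns : ('I_n -> R) -> R).
Hypotheses (hK1 : (1 < K)%N) (hKn : (K < n)%N).
Hypotheses (hN : is_norm Ns) (hS : sign_invariant Ns) (hP : perm_invariant Ns).
Variables (x : 'I_n -> R) (sg : {perm 'I_n}).
Hypothesis hsg : forall i : 'I_n, absx x i = Rabs (x (sg i)).

Local Notation p := (ix K x).

(* written in the coordinates that sort [|x|]: the head of [x], then [w] with the signs of [x] *)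
Definition completion (w : 'I_n -> R) (l : 'I_n) : R :=
  if (l < p)%N then x (sg l) else sign_of (x (sg l)) * w l.

Section Completion.
Variable w : 'I_n -> R.
Hypothesis hw : box_sparse (tail_len K x) (delta K x) w.

Lemma abs_completion l : Rabs (completion w l) = if (l < p)%N then absx x l else w l.
Proof.
rewrite /completion hsg; case: ifP => _ //.
by rewrite Rabs_mult Rabs_sign_of Rmult_1_l Rabs_pos_eq //; case: (hw.1 l).
Qed.

Lemma card_completion_gt th : 0 <= th ->
  (#|[pred l | Rltb th (Rabs (completion w l))]| <=
   #|[pred l : 'I_n | (l < p)%N && Rltb th (absx x l)]| +
   #|[pred l : 'I_n | (p <= l)%N && Rltb th (w l)]|)%N.
Proof.
move=> hth; rewrite -cardUI; apply: leq_trans (leq_addr _ _); apply: subset_leq_card.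
apply/subsetP => l; rewrite !inE abs_completion.
by case: ltnP => hl h; apply/orP; [left|right]; rewrite ?hl ?h.
Qed.

Lemma card_nz_completion : (card_nz (completion w) <= K)%N.
Proof.
case: (ix_spec x hK1 hKn) => hpK _ _.
rewrite card_nzE; apply: leq_trans (card_completion_gt (Rle_refl 0)) _.
apply: leq_trans (_ : (p + tail_len K x <= K)%N); last by rewrite /tail_len; lia.
apply: leq_add; first by apply: (card_ord_lt_and (fun l => Rltb 0 (absx x l))); lia.
exact: (card_gt_box_sparse (fun l : 'I_n => p <= l)%N hw (Rle_refl 0)).
Qed.

Lemma absx_completion_le i : absx (completion w) i <= useq K x i.
Proof.
case: (ix_spec x hK1 hKn) => hpK _ _; have hw1 := hw.1.
apply: absx_le_of_card; first exact: useq_ge0.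
apply: leq_trans (card_completion_gt (useq_ge0 x hK1 hKn i)) _.
rewrite /useq; case: (ltnP i p) => hip.
  rewrite (card_gt_box_eq0 (fun l : 'I_n => p <= l)%N hw1 (delta_le_absx hK1 hKn hip)) addn0.
  apply: leq_trans (_ : #|[pred l : 'I_n | (l < i)%N]| <= i)%N; last by rewrite card_ord_lt //; lia.
  apply: subset_leq_card; apply/subsetP => l; rewrite !inE => /andP[_ /RltbP h].
  by rewrite ltnNge; apply/negP => /(absx_nonincr x); lra.
case: (ltnP i K) => hiK.
  rewrite (card_gt_box_eq0 (fun l : 'I_n => p <= l)%N hw1 (Rle_refl _)) addn0.
  by apply: leq_trans (card_ord_lt_and (fun l => Rltb (delta K x) (absx x l)) _) hip; lia.
apply: leq_trans (_ : (p + tail_len K x <= i)%N); last by rewrite /tail_len; lia.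
apply: leq_add; first by apply: (card_ord_lt_and (fun l => Rltb 0 (absx x l))); lia.
exact: (card_gt_box_sparse (fun l : 'I_n => p <= l)%N hw (Rle_refl 0)).
Qed.

Lemma norm_completion_le : Ns (completion w) <= Ns (u K x).
Proof.
rewrite -(norm_absx hS hP); apply: (norm_monotone hN hS) => i.
rewrite Rabs_pos_eq ?Rabs_pos_eq; [exact: absx_completion_le|exact: useq_ge0|exact: absx_ge0].
Qed.

End Completion.

Lemma conv_box_sparse_tail : conv (box_sparse (tail_len K x) (delta K x))
  (fun l : 'I_n => if (l < p)%N then 0 else absx x l).
Proof.
case: (ix_spec x hK1 hKn) => hpK _ _; have d0 := delta_ge0 x hK1 hKn.
apply: hypersimplex_conv => // [l|].
  by case: ltnP => h; [lra|split; [exact: absx_ge0|exact: absx_le_delta]].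
rewrite -(tail_sum_ix x hK1 hKn) /tail_sum; right.
rewrite -(big_mkord xpredT (fun k => if (k < p)%N then 0 else absx x k)).
rewrite (big_cat_nat (leq0n p)) /=; last lia.
rewrite big1_seq ?Rplus_0_l => [|k /andP[_]]; last by rewrite mem_index_iota => /andP[_ ->].
by apply: eq_big_nat => k /andP[hk _]; rewrite ltnNge hk.
Qed.

Lemma conv_NK_scaled t : 0 < t -> Ns (u K x) <= t -> conv (NK K Ns) (fun i => x i / t).
Proof.
move=> ht hut.
(* [x / t] is the image of the tail of [|x|] under the affine map restoring the head,
   the signs and the order of the coordinates of [x] *)
pose pi := (sg^-1)%g.
pose h i := / t * (if (pi i < p)%N then x i else 0).
pose s i := / t * (if (pi i < p)%N then 0 else sign_of (x i)).
apply: conv_ext (conv_affine_image (h := h) (s := s) (pi := pi) conv_box_sparse_tail _) => [i|w hw].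
  rewrite /h /s; case: ltnP => _; first by field; lra.
  by rewrite /pi hsg permKV -[x i in RHS]sign_of_mul_abs; field; lra.
have hw_eq i : h i + s i * w (pi i) = / t * completion w (pi i).
  by rewrite /h /s /completion /pi permKV; case: ifP => _; ring.
have ht' : 0 < / t by apply: Rinv_0_lt_compat.
split.
  rewrite (norm_ext hS (g := fun i => / t * completion w (pi i))) // norm_scale //.
  rewrite (hP _ (perm_bijective pi)) Rabs_pos_eq; last lra.
  have := norm_completion_le hw => hb; apply: (Rmult_le_reg_l t) => //.
  by rewrite -Rmult_assoc Rinv_r; lra.
rewrite (card_nz_ext hw_eq) card_nz_scale; last lra.
by rewrite (card_nz_perm pi (completion w)); exact: card_nz_completion.
Qed.

End UpperBound.



Theorem mainTheorem6 (n K : nat) (Ns : ('I_n -> R) -> R) :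
  (1 < K)%N -> (K < n)%N ->
  is_norm Ns -> sign_invariant Ns -> perm_invariant Ns ->
  forall x : 'I_n -> R,
    is_gauge (conv (NK K Ns)) x (Ns (u K x)).
Proof.
move=> hK1 hKn hN hS hP x; split; first exact: norm_u_le_of_conv_NK.
move=> b hb; apply: Rnot_lt_le => hlt.
case: (absx_perm x) => sg hsg.
have hu := norm_ge0 hN hS (u K x).
pose t := (b + Ns (u K x)) / 2.
have ht : 0 < t by rewrite /t; lra.
have := hb t ht (conv_NK_scaled hK1 hKn hN hS hP hsg ht (_ : _ <= t)).
by rewrite /t; lra.
Qed.
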